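(* Let $F_v$ be a non-archimedean local field with ring of integers $\mathcal{O}_{F_v}$, uniformizer $\varpi_v$ and residue field of size $q_v$. Let $e\ge0$ be an integer and let $\phi_v$ be the characteristic function of $\mathrm{Z}(F_v)\mathrm{K}_{v,e}$. Let $(m,u)\in\mathcal{O}_{F_v}\times\mathcal{O}_{F_v}^\times$, $\gamma_{m,u}=\begin{pmatrix}0&1\\-u&m\end{pmatrix}$, $f_v=\mathrm{val}_v(m^2-4u)$, and let $N_v$ be the number of $t\in\mathcal{O}_{F_v}/\varpi_v\mathcal{O}_{F_v}$ with $t^2-mt+u=0$. Then \[ \left|\int_{F_v^\times}\int_{F_v}\phi_v\!\left(\begin{pmatrix}1&x\\0&y\end{pmatrix}^{-1}\gamma_{m,u}\begin{pmatrix}1&x\\0&y\end{pmatrix}\right)\frac{d_vx\,d_vy}{|y|_v^2}\right|\le\begin{cases}\dfrac{q_v-1+N_v}{q_v} & \text{if } e=f_v=0,\\[2mm] 4\,q_v^{-e+\frac{f_v}{2}} & \text{otherwise.}\end{cases} \]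
   Context: $\mathrm{Z}(F_v)$ is the center (scalar matrices) of $\mathrm{GL}_2(F_v)$; $\mathrm{K}_{v,e}=\{\begin{pmatrix}a&b\\c&d\end{pmatrix}\in\mathrm{GL}_2(\mathcal{O}_{F_v}): \varpi_v^e\mid c\}$; $d_vx$ is the additive Haar measure on $F_v$ with $\mathrm{Vol}(\mathcal{O}_{F_v})=1$ and $|\cdot|_v$ the normalized absolute value. (In the paper the left side is the orbital integral $\int_{\overline{\mathrm{G}_{\gamma_{m,u}}(F_v)}\backslash\overline{\mathrm{G}}(F_v)}\phi_v(g^{-1}\gamma_{m,u}g)\,dg$, with the quotient measure defined to be $d_vx\,d_vy/|y|_v^2$ on representatives $\begin{pmatrix}1&x\\0&y\end{pmatrix}$ and zero on the other representatives.) *)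

From HB Require Import structures.
From mathcomp Require Import all_boot all_order all_algebra.
From mathcomp Require Import all_classical all_reals all_analysis.
Set Implicit Arguments. Unset Strict Implicit. Unset Printing Implicit Defensive.
Import Order.TTheory GRing.Theory Num.Theory.
Local Open Scope classical_set_scope.
Local Open Scope ring_scope.

(* A non-archimedean local field: a field K with a normalized discrete *)
(* valuation v : K -> int (the value of v at 0 is irrelevant and never *)
(* used), complete for v, with finite residue field of size q.         *)
Section LocalField.
Variables (K : fieldType) (v : K -> int).

Definition inO (x : K) : Prop := x = 0 \/ (0 <= v x)%R.
Definition unitO (x : K) : Prop := x <> 0 /\ v x = 0.
Definition divpow (k : int) (x : K) : Prop := x = 0 \/ (k <= v x)%R.
Definition congrv (a b : K) : Prop := divpow 1 (a - b).

Definition is_discrete_valuation : Prop :=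
  [/\ (forall x y, x != 0 -> y != 0 -> v (x * y) = v x + v y),
      (forall x y, x != 0 -> y != 0 -> x + y != 0 ->
          Num.min (v x) (v y) <= v (x + y)) &
      (exists w : K, w != 0 /\ v w = 1) ].

Definition v_cauchy (s : nat -> K) : Prop :=
  forall k : int, exists n0 : nat, forall n p : nat,
    (n0 <= n)%N -> (n0 <= p)%N -> divpow k (s n - s p).
Definition v_converges (s : nat -> K) (l : K) : Prop :=
  forall k : int, exists n0 : nat, forall n : nat, (n0 <= n)%N -> divpow k (s n - l).
Definition v_complete : Prop :=
  forall s, v_cauchy s -> exists l, v_converges s l.

Definition num_classes_mod (P : K -> Prop) (n : nat) : Prop :=
  exists s : seq K, [/\ size s = n,
    (forall i, (i < n)%N -> P (nth 0 s i)),
    (forall i j, (i < n)%N -> (j < n)%N -> congrv (nth 0 s i) (nth 0 s j) -> i = j) &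
    (forall t, P t -> exists2 i, (i < n)%N & congrv t (nth 0 s i)) ].

Definition nonarch_local_field (q : nat) : Prop :=
  [/\ is_discrete_valuation, v_complete & num_classes_mod inO q].

Definition absv (R : realType) (q : nat) (x : K) : R :=
  if x == 0 then 0 else (q%:R : R) ^ (- v x).

(* balls a + varpi^k O_F; they generate the Borel sigma-algebra *)
Definition vballs : set (set K) :=
  [set B | exists (a : K) (k : int), B = [set x | divpow k (x - a)]].

End LocalField.

Definition Kpt (K : fieldType) : Type := K.
HB.instance Definition _ (K : fieldType) := Choice.on (Kpt K).
HB.instance Definition _ (K : fieldType) := isPointed.Build (Kpt K) (0 : K).
Notation Kmeas v := (g_sigma_algebraType (vballs v : set (set (Kpt _)))).

Section Matrices.
Variables (K : fieldType) (v : K -> int).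

Definition mat2 (a b c d : K) : 'M[K]_2 :=
  \matrix_(i < 2, j < 2) nth 0 (nth [::] [:: [:: a; b]; [:: c; d]] i) j.

Definition gamma_mu (m u : K) : 'M[K]_2 := mat2 0 1 (- u) m.

Definition gxy (x y : K) : 'M[K]_2 := mat2 1 x 0 y.

Definition in_Ke (e : nat) (A : 'M[K]_2) : Prop :=
  [/\ (forall i j, inO v (A i j)), unitO v (\det A) & divpow v e%:Z (A 1 0)].

Definition in_ZKe (e : nat) (A : 'M[K]_2) : Prop :=
  exists z : K, z != 0 /\ in_Ke e (z *: A).

Definition phi_v (R : realType) (e : nat) (A : 'M[K]_2) : R :=
  \1_[set B | in_ZKe e B] A.

(* the right-hand side; f_v = val(disc) with disc = m^2 - 4u, f_v = +oo if disc = 0 *)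
Definition lemma3p6_bound (R : realType) (q N e : nat) (disc : K) : \bar R :=
  if disc == 0 then +oo%E
  else if (e == 0)%N && (v disc == 0) then ((q%:R - 1 + N%:R) / q%:R)%:E
  else (4 * (q%:R : R) `^ ((v disc)%:~R / 2 - e%:R))%:E.

End Matrices.

From HB Require Import structures.
From mathcomp Require Import all_boot all_order all_algebra.
From mathcomp Require Import all_classical all_reals all_analysis.
From mathcomp Require Import zify ring lra.
Set Implicit Arguments. Unset Strict Implicit. Unset Printing Implicit Defensive.
Import Order.TTheory GRing.Theory Num.Theory.
Local Open Scope classical_set_scope.
Local Open Scope ring_scope.

(* Put w = x / y.  Up to a scalar z, the conjugate of gamma_{m,u} by (1 x; 0 y) is
   (u w, y P(w); -u/y, m - u w), where P(w) = u w^2 - m w + 1 is the reciprocal of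
   t^2 - m t + u.  Its determinant z^2 u forces z to be a unit, so the conjugate lies
   in Z K_e iff v(y) <= -e, w is integral and varpi^k | P(w) for k = -v(y).  The inner
   integral is thus |y| times the measure of these approximate roots of level k, and
   the weight |y|^-2 leaves a factor q^-k.
   With D = m^2 - 4u, the identity
     D (w - w')^2 = u^2 (w - w')^4 + (P w - P w')^2 - 2 u (P w + P w') (w - w')^2
   shows that two approximate roots which are not within q^(v(D)/2 - k) of each
   other satisfy 2 v(w - w') = v(D); since the second divided difference of P is the
   unit u, no three of them can be pairwise that far apart.  Hence they lie in two
   balls of measure at most q^(v(D)/2 - k).  When v(D) = 0 the same identity lifts
   congruences mod varpi between approximate roots to congruences mod varpi^k, which
   gives one ball of measure q^-k per root of t^2 - m t + u mod varpi (and all of O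
   when k = 0).  Summing over the annuli |y| = q^k, k >= e, yields geometric series
   bounded by 2 q^(v(D)/2 - e) and (q - 1 + N)/q respectively. *)

Lemma exists_half_ceilz (t : int) : exists j : int, t <= 2 * j <= t + 1.
Proof.
exists ((t + 1) %/ 2)%Z.
have := divz_eq (t + 1) 2; have := modz_ge0 (t + 1) (isT : (2 : int) != 0).
have := ltz_pmod (t + 1) (isT : 0 < (2 : int)).
lia.
Qed.

Lemma nonmeasurable_ge0_le_integral d (T : measurableType d) (R : realType)
    (mu : {measure set T -> \bar R}) (D : set T) (f g : T -> \bar R) :
  (forall x, D x -> (0 <= f x)%E) -> (forall x, D x -> (f x <= g x)%E) ->
  (\int[mu]_(x in D) f x <= \int[mu]_(x in D) g x)%E.
Proof.
move=> f0 fg.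
have g0 x : D x -> (0 <= g x)%E by move=> Dx; apply: le_trans (f0 x Dx) (fg x Dx).
rewrite !ge0_integralE //; apply: ereal_sup_le => _ [h hf <-]; exists h => //= x.
exact: le_trans (hf x) (lee_restrict fg x).
Qed.

Lemma integral_step_series_le d (T : measurableType d) (R : realType)
    (mu : {measure set T -> \bar R}) (D : set T) (c : nat -> R) (A : nat -> set T) :
  (forall i, 0 <= c i) -> (forall i, measurable (A i)) ->
  (\int[mu]_(x in D) \sum_(i <oo) (c i * \1_(A i) x)%:E <=
   \sum_(i <oo) ((c i)%:E * mu (A i)))%E.
Proof.
move=> c0 mA.
have step0 i x : (0 <= (c i * \1_(A i) x)%:E)%E by rewrite lee_fin mulr_ge0 // indicE ler0n.
have series0 x : (0 <= \sum_(i <oo) (c i * \1_(A i) x)%:E)%E.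
  by apply: nneseries_ge0 => i _ _; exact: step0.
rewrite integral_mkcond; apply: le_trans (_ : _ <= \int[mu]_x
    \sum_(i <oo) (c i * \1_(A i) x)%:E)%E _.
  by apply: nonmeasurable_ge0_le_integral => x _; rewrite /patch; case: (x \in D).
rewrite integral_nneseries //; last first.
  move=> i; apply/measurable_realfun.measurable_EFinP.
  apply: measurable_realfun.measurable_funM; first exact: measurable_cst.
  exact: measurable_realfun.measurable_indic.
apply: lee_nneseries => [i _ _|i _]; first by apply: integral_ge0 => x _; exact: step0.
under eq_integral do rewrite EFinM.
rewrite ge0_integralZl_EFin // ?integral_indic ?setIT //.
by apply/measurable_realfun.measurable_EFinP; exact: measurable_realfun.measurable_indic.
Qed.

Lemma nneseries_bounded_le (R : realType) (t : nat -> R) (b : R) :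
  (forall i, 0 <= t i) -> (forall n, \sum_(i < n) t i <= b) ->
  (\sum_(i <oo) (t i)%:E <= b%:E)%E.
Proof.
move=> t0 tb; apply: lime_le.
  by apply: is_cvg_nneseries => n _ _; rewrite lee_fin.
by apply: nearW => n; rewrite sumEFin lee_fin big_mkord.
Qed.

Lemma geometric_partial_sum_le (R : realFieldType) (a r : R) n :
  0 <= a -> 0 <= r -> \sum_(i < n) a * r ^+ i * (1 - r) <= a.
Proof.
move=> a0 r0.
have -> : \sum_(i < n) a * r ^+ i * (1 - r) = a * (1 - r ^+ n).
  elim: n => [|n IH]; first by rewrite big_ord0 expr0 subrr mulr0.
  by rewrite big_ord_recr /= IH exprSr; ring.
by rewrite -[leRHS]mulr1 ler_wpM2l // gerBl exprn_ge0.
Qed.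

Lemma exprz_le_powR (R : realType) (x a : R) (j : int) :
  1 <= x -> - j%:~R <= a -> x ^ (- j) <= x `^ a.
Proof.
move=> x1 ja; rewrite -powR_intmul; last exact: le_trans x1.
by apply: ler_powR; rewrite // intrN.
Qed.

Section Conjugation.
Variable K : fieldType.

Lemma det_mat2 (a b c d : K) : \det (mat2 a b c d) = a * d - b * c.
Proof.
rewrite (expand_det_row _ 0) !big_ord_recr big_ord0 /= /cofactor !det_mx11 /= !mxE /=.
ring.
Qed.

Lemma mul_mat2 (a b c d a' b' c' d' : K) :
  mat2 a b c d *m mat2 a' b' c' d' =
  mat2 (a * a' + b * c') (a * b' + b * d') (c * a' + d * c') (c * b' + d * d').
Proof.
apply/matrixP => i j; rewrite !mxE !big_ord_recr big_ord0 /= !mxE.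
by case: i => [[|[|i]] Hi] //; case: j => [[|[|j]] Hj] //=; rewrite add0r.
Qed.

Lemma scale_mat2 (z a b c d : K) :
  z *: mat2 a b c d = mat2 (z * a) (z * b) (z * c) (z * d).
Proof.
apply/matrixP => i j; rewrite !mxE.
by case: i => [[|[|i]] Hi] //; case: j => [[|[|j]] Hj].
Qed.

Lemma mat2_id : mat2 1 0 0 1 = 1%:M :> 'M[K]_2.
Proof.
apply/matrixP => i j; rewrite !mxE.
by case: i => [[|[|i]] Hi] //; case: j => [[|[|j]] Hj].
Qed.

Lemma invmx_gxy (x y : K) : y != 0 -> invmx (gxy x y) = mat2 1 (- (x / y)) 0 y^-1.
Proof.
move=> y0.
have inv : gxy x y *m mat2 1 (- (x / y)) 0 y^-1 = 1%:M.
  by rewrite /gxy mul_mat2 -mat2_id; congr mat2; field.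
have [gxy_unit _] := mulmx1_unit inv.
by rewrite -[RHS]mul1mx -(mulVmx gxy_unit) -mulmxA inv mulmx1.
Qed.

Variables m u : K.

Definition rquad (w : K) : K := u * w ^+ 2 - m * w + 1.

Definition disc : K := m ^+ 2 - 4%:R * u.

Lemma disc_sqr_diff w w' : disc * (w - w') ^+ 2 = u ^+ 2 * (w - w') ^+ 4 +
  ((rquad w - rquad w') ^+ 2 - 2%:R * u * (rquad w + rquad w') * (w - w') ^+ 2).
Proof. rewrite /disc /rquad; ring. Qed.

Lemma rquad_interpolation w1 w2 w3 : u * (w2 - w1) * (w3 - w1) * (w3 - w2) =
  rquad w1 * (w3 - w2) - rquad w2 * (w3 - w1) + rquad w3 * (w2 - w1).
Proof. rewrite /rquad; ring. Qed.

Lemma scale_conj_gamma x y z : y != 0 ->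
  z *: (invmx (gxy x y) *m gamma_mu m u *m gxy x y) =
  mat2 (z * u * (x / y)) (z * y * rquad (x / y)) (- (z * u) / y) (z * (m - u * (x / y))).
Proof.
move=> y0; rewrite invmx_gxy // /gamma_mu /gxy !mul_mat2 scale_mat2.
by congr mat2; rewrite /rquad; field.
Qed.

Lemma det_scale_conj_gamma x y z : y != 0 ->
  \det (z *: (invmx (gxy x y) *m gamma_mu m u *m gxy x y)) = z ^+ 2 * u.
Proof. by move=> y0; rewrite scale_conj_gamma // det_mat2 /rquad; field. Qed.

End Conjugation.

Section Valuation.
Variables (K : fieldType) (v : K -> int).
Hypothesis Hv : is_discrete_valuation v.

(* [lia] treats [v t] and [v t'] as distinct atoms when [t] and [t'] differ only
   in their canonical-structure instances; [val_lia] first identifies them. *)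
Ltac val_lia :=
  repeat match goal with
  | H : context [v ?x] |- _ => let t := fresh "t" in set (t := v x) in *
  | |- context [v ?x] => let t := fresh "t" in set (t := v x) in *
  end;
  repeat match goal with
  | a := v ?x, b := v ?y |- _ => unify x y; change b with a in *; clear b
  end;
  lia.

Lemma valM x y : x != 0 -> y != 0 -> v (x * y) = v x + v y.
Proof. by case: Hv => h _ _; apply: h. Qed.

Lemma val1 : v 1 = 0.
Proof.
have : v (1 * 1) = v 1 + v 1 by apply: valM; rewrite oner_neq0.
rewrite mulr1; lia.
Qed.

Lemma valV x : x != 0 -> v x^-1 = - v x.
Proof. move=> x0; have := valM x0 (invr_neq0 x0); rewrite mulfV // val1; lia. Qed.

Lemma valN x : v (- x) = v x.
Proof.
have n1 : (-1 : K) != 0 by rewrite oppr_eq0 oner_neq0.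
have vN1 : v (-1) = 0.
  have : v (-1 * -1) = v (-1) + v (-1) by apply: valM.
  rewrite mulrNN mulr1 val1; lia.
have [->|x0] := eqVneq x 0; first by rewrite oppr0.
by rewrite -mulN1r valM // vN1 add0r.
Qed.

Lemma valX x n : x != 0 -> v (x ^+ n) = v x * n%:Z.
Proof.
move=> x0; elim: n => [|n IH]; first by rewrite expr0 val1 mulr0.
rewrite exprS valM ?expf_neq0 // IH; lia.
Qed.

Lemma valXz x (j : int) : x != 0 -> v (x ^ j) = v x * j.
Proof.
move=> x0; case: j => n; first by rewrite /exprz valX.
rewrite NegzE /exprz valV ?expf_neq0 // valX //; lia.
Qed.

Lemma divpowP k x : divpow v k x <-> (x != 0 -> k <= v x).
Proof.
split; first by case=> [->|h]; rewrite ?eqxx.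
by move=> h; have [->|x0] := eqVneq x 0; [left|right; apply: h].
Qed.

Lemma divpow_val x : divpow v (v x) x.
Proof. by apply/divpowP. Qed.

Lemma divpow_le_val k x : x != 0 -> divpow v k x -> k <= v x.
Proof. by move=> x0 /divpowP; apply. Qed.

Lemma divpow_le k l x : l <= k -> divpow v k x -> divpow v l x.
Proof. by move=> lk /divpowP h; apply/divpowP => /h; lia. Qed.

Lemma divpowD k x y : divpow v k x -> divpow v k y -> divpow v k (x + y).
Proof.
move=> /divpowP hx /divpowP hy; apply/divpowP => xy0.
have [x0|x0] := eqVneq x 0; first by move: xy0; rewrite x0 add0r; apply: hy.
have [y0|y0] := eqVneq y 0; first by move: xy0; rewrite y0 addr0; apply: hx.
case: Hv => _ ultra _; apply: le_trans (ultra _ _ x0 y0 xy0).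
by rewrite le_min hx // hy.
Qed.

Lemma divpowN k x : divpow v k x -> divpow v k (- x).
Proof. by move=> /divpowP h; apply/divpowP; rewrite oppr_eq0 valN. Qed.

Lemma divpowB k x y : divpow v k x -> divpow v k y -> divpow v k (x - y).
Proof. by move=> hx hy; apply: divpowD => //; apply: divpowN. Qed.

Lemma divpowM k l x y : divpow v k x -> divpow v l y -> divpow v (k + l) (x * y).
Proof.
move=> /divpowP hx /divpowP hy; apply/divpowP.
rewrite mulf_eq0 negb_or => /andP[x0 y0].
rewrite valM //; have := hx x0; have := hy y0; lia.
Qed.

Lemma divpow_mulKl k c x : c != 0 -> divpow v k (c * x) -> divpow v (k - v c) x.
Proof.
move=> c0 h; apply/divpowP => x0.
have := divpow_le_val (mulf_neq0 c0 x0) h; rewrite valM //; lia.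
Qed.

Lemma divpow_nat n : divpow v 0 n%:R.
Proof.
elim: n => [|n IH]; first by left.
by rewrite -addn1 natrD; apply: divpowD => //; right; rewrite val1.
Qed.

Lemma val_addr_dominant x y k : x != 0 -> v x = k -> divpow v (k + 1) y ->
  x + y != 0 /\ v (x + y) = k.
Proof.
move=> x0 vx hy.
have xy0 : x + y != 0.
  apply/negP => /eqP xy; have yE : y = - x by apply/eqP; rewrite -subr_eq0 opprK addrC xy.
  have := divpow_le_val _ hy; rewrite yE oppr_eq0 valN => /(_ x0); lia.
have hk : divpow v k (x + y).
  by apply: divpowD; [rewrite -vx; apply: divpow_val|apply: divpow_le hy; lia].
split => //; apply/eqP; rewrite eq_le divpow_le_val // andbT.
rewrite leNgt; apply/negP => lt.
have : divpow v (k + 1) ((x + y) - y) by apply: divpowB => //; apply/divpowP; lia.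
by rewrite addrK => /(divpow_le_val x0); lia.
Qed.


Section ApproximateRoots.
Variables m u : K.
Hypothesis Hu : unitO v u.

Local Notation P := (rquad m u).
Local Notation D := (disc m u).
Local Notation aroot k w := (divpow v k (rquad m u w)).

Let u0 : u != 0. Proof. by case: Hu => /eqP. Qed.
Let vu : v u = 0. Proof. by case: Hu. Qed.

Lemma divpow_disc_error k w w' : aroot k w -> aroot k w' ->
  divpow v (Num.min (k + k) (k + 2 * v (w - w')))
    ((P w - P w') ^+ 2 - 2%:R * u * (P w + P w') * (w - w') ^+ 2).
Proof.
move=> hw hw'.
have sq : divpow v (k + k) ((P w - P w') ^+ 2).
  by rewrite expr2; apply: divpowM; apply: divpowB.
have cross : divpow v (0 + 0 + k + (v (w - w') + v (w - w')))
    (2%:R * u * (P w + P w') * (w - w') ^+ 2).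
  rewrite expr2; apply: divpowM; last by apply: divpowM; apply: divpow_val.
  apply: divpowM; last exact: divpowD.
  by apply: divpowM; [exact: divpow_nat|rewrite -vu; exact: divpow_val].
by apply: divpowB; [apply: divpow_le sq|apply: divpow_le cross]; rewrite ge_min; val_lia.
Qed.

Lemma distant_aroots_val_disc k w w' : aroot k w -> aroot k w' -> w != w' ->
  2 * v (w - w') < k -> D != 0 /\ v D = 2 * v (w - w').
Proof.
move=> hw hw' ww lt.
have d0 : w - w' != 0 by rewrite subr_eq0.
have main0 : u ^+ 2 * (w - w') ^+ 4 != 0 by rewrite mulf_neq0 ?expf_neq0.
have vmain : v (u ^+ 2 * (w - w') ^+ 4) = 4 * v (w - w').
  by rewrite valM ?expf_neq0 // !valX // vu; val_lia.
have err : divpow v (4 * v (w - w') + 1)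
    ((P w - P w') ^+ 2 - 2%:R * u * (P w + P w') * (w - w') ^+ 2).
  by apply: divpow_le (divpow_disc_error hw hw'); rewrite le_min; val_lia.
have [] := val_addr_dominant main0 vmain err; rewrite -disc_sqr_diff.
rewrite mulf_eq0 negb_or => /andP[D0 _]; rewrite valM ?expf_neq0 // valX //.
by split => //; val_lia.
Qed.

Lemma near_aroots_val_disc k w w' : D != 0 -> v D < k -> aroot k w -> aroot k w' ->
  w != w' -> k <= 2 * v (w - w') -> 2 * k <= v D + 2 * v (w - w').
Proof.
move=> D0 Dk hw hw' ww le; rewrite leNgt; apply/negP => lt.
have d0 : w - w' != 0 by rewrite subr_eq0.
have : divpow v (v D + 2 * v (w - w') + 1) (D * (w - w') ^+ 2).
  rewrite disc_sqr_diff; apply: divpowD.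
    by apply/divpowP => _; rewrite valM ?expf_neq0 // !valX // vu; val_lia.
  by apply: divpow_le (divpow_disc_error hw hw'); rewrite le_min; val_lia.
move=> /(divpow_le_val (mulf_neq0 D0 (expf_neq0 _ d0))).
rewrite valM ?expf_neq0 // valX //; val_lia.
Qed.

Lemma no_aroot_triangle k w1 w2 w3 : v D < k -> aroot k w1 -> aroot k w2 -> aroot k w3 ->
  w2 != w1 -> w3 != w1 -> w3 != w2 ->
  2 * v (w2 - w1) = v D -> 2 * v (w3 - w1) = v D -> 2 * v (w3 - w2) = v D -> False.
Proof.
move=> Dk h1 h2 h3 n21 n31 n32 e21 e31 e32.
have d21 : w2 - w1 != 0 by rewrite subr_eq0.
have d31 : w3 - w1 != 0 by rewrite subr_eq0.
have d32 : w3 - w2 != 0 by rewrite subr_eq0.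
have prod0 : u * (w2 - w1) * (w3 - w1) * (w3 - w2) != 0 by rewrite !mulf_neq0.
have vprod : v (u * (w2 - w1) * (w3 - w1) * (w3 - w2)) =
    v (w2 - w1) + v (w3 - w1) + v (w3 - w2).
  by rewrite !valM ?mulf_neq0 // vu; val_lia.
have term d : 2 * v d = v D -> d != 0 -> divpow v (v (w2 - w1)) d.
  by move=> ed d0; apply/divpowP => _; val_lia.
have : divpow v (k + v (w2 - w1)) (u * (w2 - w1) * (w3 - w1) * (w3 - w2)).
  by rewrite (rquad_interpolation m); apply: divpowD; first apply: divpowB; apply: divpowM => //; apply: term.
by move=> /(divpow_le_val prod0); rewrite vprod; val_lia.
Qed.

Lemma aroots_outside_ball_val_disc k j w w' : D != 0 -> v D < k -> 2 * j <= 2 * k - v D + 1 ->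
  aroot k w -> aroot k w' -> ~ divpow v j (w - w') -> w != w' /\ 2 * v (w - w') = v D.
Proof.
move=> D0 Dk hj hw hw' nd.
have ww : w != w' by apply/eqP => e; apply: nd; rewrite e subrr; left.
have d0 : w - w' != 0 by rewrite subr_eq0.
have lt : v (w - w') < j by rewrite ltNge; apply/negP => le; apply: nd; apply/divpowP.
split => //; have [lt2|ge] := ltP (2 * v (w - w')) k.
  by case: (distant_aroots_val_disc hw hw' ww lt2).
have := near_aroots_val_disc D0 Dk hw hw' ww ge; val_lia.
Qed.

Lemma aroots_in_two_balls k : D != 0 -> exists w1 w2 (j : int), 2 * k - v D <= 2 * j /\
  forall w, aroot k w -> divpow v j (w - w1) \/ divpow v j (w - w2).
Proof.
move=> D0.
have [j /andP[j_lb j_ub]] := exists_half_ceilz (2 * k - v D).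
have [[w1 hw1]|none] := pselect (exists w, aroot k w); last first.
  by exists 0, 0, j; split => // w hw; case: none; exists w.
have [kD|Dk] := leP k (v D).
  have [i /andP[i_lb i_ub]] := exists_half_ceilz k.
  exists w1, w1, i; split; first by val_lia.
  move=> w hw; left; apply/divpowP => d0.
  have ww : w != w1 by rewrite -subr_eq0.
  have [lt|] := ltP (2 * v (w - w1)) k; last by val_lia.
  by have [_] := distant_aroots_val_disc hw hw1 ww lt; val_lia.
have [[w2 [hw2 nd2]]|near1] :=
  pselect (exists w2, aroot k w2 /\ ~ divpow v j (w2 - w1)); last first.
  exists w1, w1, j; split => // w hw; left.
  by apply: contrapT => nd; apply: near1; exists w.
exists w1, w2, j; split => // w hw.
have [|nd1] := pselect (divpow v j (w - w1)); first by left.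
have [|nd2'] := pselect (divpow v j (w - w2)); first by right.
have [n21 e21] := aroots_outside_ball_val_disc D0 Dk j_ub hw2 hw1 nd2.
have [n1 e1] := aroots_outside_ball_val_disc D0 Dk j_ub hw hw1 nd1.
have [n2 e2] := aroots_outside_ball_val_disc D0 Dk j_ub hw hw2 nd2'.
by case: (no_aroot_triangle Dk hw1 hw2 hw n21 n1 n2 e21 e1 e2).
Qed.

Lemma aroots_congr_lift k w w' : D != 0 -> v D = 0 -> 1 <= k ->
  aroot k w -> aroot k w' -> divpow v 1 (w - w') -> divpow v k (w - w').
Proof.
move=> D0 vD k1 hw hw' /divpowP near; apply/divpowP => d0.
have ww : w != w' by rewrite -subr_eq0.
have := near d0; have [lt|ge] := ltP (2 * v (w - w')) k.
  by have [_] := distant_aroots_val_disc hw hw' ww lt; val_lia.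
have Dk : v D < k by val_lia.
by have := near_aroots_val_disc D0 Dk hw hw' ww ge; val_lia.
Qed.

Lemma in_ZKe_conj_gamma e x y : y != 0 ->
  in_ZKe v e (invmx (gxy x y) *m gamma_mu m u *m gxy x y) ->
  [/\ e%:Z <= - v y, inO v (x / y) & aroot (- v y) (x / y)].
Proof.
move=> y0 [z [z0 [entries det_unit corner]]].
have vz : v z = 0.
  move: det_unit; rewrite det_scale_conj_gamma // => -[_].
  by rewrite valM ?expf_neq0 // valX // vu; val_lia.
have zu0 : z * u != 0 by rewrite mulf_neq0.
have vzu : v (z * u) = 0 by rewrite valM // vz vu.
move: entries corner; rewrite scale_conj_gamma // => entries.
have := entries 0 0; have := entries 0 1; rewrite !mxE /= => h01 h00 h10.
split.
- move: h10; rewrite mulNr => /divpowN; rewrite opprK.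
  move=> /(divpow_le_val (mulf_neq0 zu0 (invr_neq0 y0))).
  by rewrite valM ?invr_eq0 // valV // vzu; val_lia.
- by move: (divpow_mulKl zu0 h00); rewrite vzu subr0.
- have zy0 : z * y != 0 by rewrite mulf_neq0.
  move: (divpow_mulKl zy0 h01); rewrite valM // vz; apply: divpow_le; val_lia.
Qed.

Definition aroots_covered (k : int) (cs : seq K) (j : int) : Prop :=
  forall w, inO v w -> aroot k w -> exists2 c, c \in cs & divpow v j (w - c).

Lemma aroots_covered_residues k N : D != 0 -> v D = 0 -> 1 <= k ->
  num_classes_mod v (fun t => inO v t /\ congrv v (t ^+ 2 - m * t + u) 0) N ->
  exists2 cs : seq K, size cs = N & aroots_covered k cs k.
Proof.
move=> D0 vD k1 [s [_ _ _ s_cover]].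
pose lifts l w := [/\ inO v w, aroot k w & congrv v (u * w) (nth 0 s l)].
pose pick l := if pselect (exists w, lifts l w) is left ex then projT1 (cid ex) else 0.
exists [seq pick l | l <- iota 0 N]; first by rewrite size_map size_iota.
move=> w wO hw.
have root_uw : inO v (u * w) /\ congrv v ((u * w) ^+ 2 - m * (u * w) + u) 0.
  split; first by move: (divpowM (divpow_val u) wO); rewrite vu add0r.
  rewrite /congrv subr0 (_ : _ + u = u * P w); last by rewrite /rquad; ring.
  by move: (divpowM (divpow_val u) hw); rewrite vu add0r => /(divpow_le k1).
have [l lN hl] := s_cover _ root_uw.
have [_ pick_root pick_congr] : lifts l (pick l).
  by rewrite /pick; case: pselect => [ex|[]]; [case: (cid ex)|exists w].
exists (pick l); first by apply: map_f; rewrite mem_iota.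
apply: aroots_congr_lift D0 vD k1 hw pick_root _.
move: (divpowB hl pick_congr); rewrite (_ : u * w - _ - _ = u * (w - pick l)); last by ring.
by move=> /(divpow_mulKl u0); rewrite vu subr0.
Qed.

End ApproximateRoots.

Section HaarMeasure.
Variables (R : realType) (q : nat) (mu : {measure set (Kmeas v) -> \bar R}).
Hypothesis Hcl : num_classes_mod v (inO v) q.
Hypothesis mu_translate : forall (a : K) (A : set (Kmeas v)), measurable A ->
  mu [set x : Kmeas v | A ((x : K) + a)] = mu A.
Hypothesis mu_inO : mu (inO v : set (Kmeas v)) = 1%E.

Definition ball (c : K) (j : int) : set (Kmeas v) :=
  [set x : Kmeas v | divpow v j ((x : K) - c)].

Lemma measurable_ball c j : measurable (ball c j).
Proof. by apply: sub_sigma_algebra; exists c, j. Qed.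

Lemma mu_ball_translate c j : mu (ball c j) = mu (ball 0 j).
Proof.
rewrite -(mu_translate c (measurable_ball c j)); congr (mu _).
by apply/seteqP; split => x; rewrite /ball /= addrK subr0.
Qed.

Lemma ball0_0 : ball 0 0 = inO v.
Proof. by apply/seteqP; split => x; rewrite /ball /= subr0. Qed.

Lemma residue_card_gt1 : (1 < q)%N.
Proof.
case: Hcl => s [_ _ inj cover].
have [i0 i0q h0] := cover 0 (or_introl erefl).
have [i1 i1q h1] : exists2 i, (i < q)%N & congrv v 1 (nth 0 s i).
  by apply: cover; right; rewrite val1.
suff : i0 != i1 by lia.
apply/eqP => e; subst i1; move: (divpowB h1 h0).
rewrite (_ : 1 - nth 0 s i0 - (0 - nth 0 s i0) = 1); last by ring.
by move=> /(divpow_le_val (oner_neq0 K)); rewrite val1.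
Qed.

Lemma mu_ball_split j : mu (ball 0 j) = (\sum_(i < q) mu (ball 0 (j + 1)))%E.
Proof.
case: Hcl => s [_ s_in s_inj s_cover].
have [pi [pi0 vpi]] : exists p : K, p != 0 /\ v p = 1 by case: Hv.
have pj0 : pi ^ j != 0 := expfz_neq0 _ pi0.
have pj : divpow v j (pi ^ j) by rewrite -[X in divpow v X]mul1r -vpi -valXz //; exact: divpow_val.
pose F (i : 'I_q) := ball (pi ^ j * nth 0 s i) (j + 1).
have disjF : trivIset setT F.
  move=> a b _ _ [x [ha hb]]; apply/val_inj/esym/s_inj; rewrite ?ltn_ord //.
  move: (divpowB ha hb); rewrite (_ : x - pi ^ j * nth 0 s a - (x - pi ^ j * nth 0 s b) =
     pi ^ j * (nth 0 s b - nth 0 s a)); last by ring.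
  by move=> /(divpow_mulKl pj0); rewrite valXz // vpi mul1r addrAC subrr add0r.
have -> : ball 0 j = \big[setU/set0]_(i < q) F i.
  rewrite -(bigcup_pred predT); apply/seteqP; split => x /=; rewrite /ball /= subr0.
  - move=> hx; have hx' : inO v (x / pi ^ j).
      by move: (divpowM hx (divpow_val (pi ^ j)^-1)); rewrite valV // valXz // vpi mul1r addrN.
    have [i iq hc] := s_cover _ hx'; exists (Ordinal iq) => //=.
    rewrite /F /ball /= (_ : x - pi ^ j * nth 0 s i = pi ^ j * (x / pi ^ j - nth 0 s i)).
      exact: divpowM pj hc.
    by field.
  - move=> [i _]; rewrite /F /ball /= => hx.
    rewrite (_ : x = (x - pi ^ j * nth 0 s i) + pi ^ j * nth 0 s i); last by ring.
    apply: divpowD; first by apply: divpow_le hx; lia.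
    by move: (divpowM pj (s_in _ (ltn_ord i))); rewrite addr0.
rewrite (measure_bigsetU_ord mu xpredT) //; last by move=> i; exact: measurable_ball.
by apply: eq_bigr => i _; exact: mu_ball_translate.
Qed.

Let qR : R := q%:R.
Let qR_gt0 : 0 < qR. Proof. by rewrite ltr0n; have := residue_card_gt1; case: q. Qed.
Let qR0 : qR != 0. Proof. exact: lt0r_neq0. Qed.

Lemma mu_ball0_Nnat (n : nat) : mu (ball 0 (- n%:Z)) = (qR ^+ n)%:E.
Proof.
elim: n => [|n IH]; first by rewrite oppr0 expr0 ball0_0 mu_inO.
rewrite mu_ball_split (_ : - n.+1%:Z + 1 = - n%:Z); last by lia.
by rewrite IH sumEFin sumr_const card_ord exprSr mulr_natr.
Qed.

Lemma mu_ball0_nat (n : nat) : mu (ball 0 n%:Z) = ((qR ^+ n)^-1)%:E.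
Proof.
elim: n => [|n IH]; first by rewrite expr0 invr1 ball0_0 mu_inO.
have sub : ball 0 n.+1 `<=` ball 0 n by move=> x; apply: divpow_le; lia.
have fin : mu (ball 0 n.+1) \is a fin_num.
  rewrite ge0_fin_numE ?measure_ge0 //; apply: le_lt_trans (ltry (qR ^+ n)^-1).
  by rewrite -IH; apply: le_measure; rewrite ?inE //; exact: measurable_ball.
move: (mu_ball_split n); rewrite (_ : n%:Z + 1 = n.+1%:Z); last by lia.
rewrite IH -(fineK fin) sumEFin sumr_const card_ord => -[split_eq].
by rewrite exprSr invfM split_eq -mulr_natr mulfK.
Qed.

Lemma mu_ball c j : mu (ball c j) = (qR ^ (- j))%:E.
Proof.
rewrite mu_ball_translate; case: j => n; first by rewrite mu_ball0_nat -exprnN.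
by rewrite NegzE opprK mu_ball0_Nnat.
Qed.

Lemma mu_bigsetU_balls_le (cs : seq K) j :
  (mu (\big[setU/set0]_(c <- cs) ball c j) <= ((size cs)%:R * qR ^ (- j))%:E)%E.
Proof.
elim: cs => [|c cs IH]; first by rewrite big_nil measure0 mul0r.
rewrite big_cons /= -addn1 natrD mulrDl mul1r EFinD addrC -(mu_ball c j).
apply: le_trans (measureU2 _ (measurable_ball _ _) _) _.
  by apply: bigsetU_measurable => i _; exact: measurable_ball.
exact: leeD2l.
Qed.

Definition annulus (k : int) : set (Kmeas v) := ball 0 (- k) `\` ball 0 (- k + 1).

Lemma annulusP k (y : Kmeas v) : (y : K) != 0 -> v y = - k -> annulus k y.
Proof.
move=> y0 vy; split; rewrite /ball /= subr0; first by right; rewrite vy.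
by case=> [y0'|]; [move: y0; rewrite y0' eqxx|rewrite vy; lia].
Qed.

Lemma measurable_annulus k : measurable (annulus k).
Proof. by apply: measurableD; exact: measurable_ball. Qed.

Lemma mu_annulus k : mu (annulus k) = (qR ^ k * (1 - qR^-1))%:E.
Proof.
have sub : ball 0 (- k + 1) `<=` ball 0 (- k) by move=> x; apply: divpow_le; lia.
rewrite measureD; try exact: measurable_ball; last first.
  by change (mu (ball 0 (- k)) < +oo)%E; rewrite mu_ball ltry.
change ((mu (ball 0 (- k)) - mu (ball 0 (- k) `&` ball 0 (- k + 1)))%E =
  (qR ^ k * (1 - qR^-1))%:E).
rewrite (setIidr sub) !mu_ball opprK -EFinB; congr EFin.
rewrite (_ : - (- k + 1) = k + (-1)); last by lia.
by rewrite expfzDr // -exprnN expr1; ring.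
Qed.

Section OrbitalIntegral.
Variables (m u : K) (e : nat).
Hypothesis Hu : unitO v u.

Local Notation phi x y := (phi_v v R e (invmx (gxy x y) *m gamma_mu m u *m gxy x y)).

Definition orbital_integrand (y : Kmeas v) : \bar R :=
  ((\int[mu]_(x in [set: Kmeas v]) (phi x y)%:E) * ((absv v R q y) ^-2)%:E)%E.

Lemma phi_ge0 x y : 0 <= phi x y.
Proof. by rewrite /phi_v indicE ler0n. Qed.

Lemma orbital_integrand_ge0 y : (0 <= orbital_integrand y)%E.
Proof.
apply: mule_ge0; first by apply: integral_ge0 => x _; rewrite lee_fin phi_ge0.
rewrite lee_fin invr_ge0 exprn_ge0 // /absv.
by case: ifP => // _; apply: exprz_ge0; exact: ltW.
Qed.

Lemma orbital_integrand0 (y : Kmeas v) : (y : K) != 0 -> - v y < e%:Z ->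
  orbital_integrand y = 0%E.
Proof.
move=> y0 lt; rewrite /orbital_integrand integral0_eq ?mul0e // => x _.
rewrite /phi_v indicE memNset // => /(in_ZKe_conj_gamma Hu y0) [].
by rewrite leNgt lt.
Qed.

Lemma inner_integral_le (y : K) cs j : y != 0 -> aroots_covered m u (- v y) cs j ->
  (\int[mu]_(x in [set: Kmeas v]) (phi x y)%:E <=
     ((size cs)%:R * qR ^ (- (j + v y)))%:E)%E.
Proof.
move=> y0 cover.
pose T := \big[setU/set0]_(c <- [seq c * y | c <- cs]) ball c (j + v y).
have mT : measurable T by apply: bigsetU_measurable => c _; exact: measurable_ball.
apply: le_trans (_ : _ <= \int[mu]_(x in [set: Kmeas v]) (\1_T x)%:E)%E _.
  apply: nonmeasurable_ge0_le_integral => x _; rewrite lee_fin ?phi_ge0 // /phi_v !indicE.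
  have [hZ|] := pselect (in_ZKe v e (invmx (gxy x y) *m gamma_mu m u *m gxy x y)); last first.
    by move=> nZ; rewrite memNset.
  have [_ hO hP] := in_ZKe_conj_gamma Hu y0 hZ.
  have [c cs_c hc] := cover _ hO hP.
  suff Tx : T x by rewrite !mem_set.
  rewrite /T -bigcup_seq; exists (c * y); first exact: map_f.
  rewrite /ball /= (_ : (x : K) - c * y = ((x : K) / y - c) * y); last by field.
  by apply: divpowM => //; exact: divpow_val.
rewrite integral_indic // setIT.
by apply: le_trans (mu_bigsetU_balls_le _ _) _; rewrite size_map.
Qed.

Lemma orbital_integrand_le (y : Kmeas v) (i : nat) cs j : (y : K) != 0 ->
  - v y = e%:Z + i%:Z -> aroots_covered m u (e%:Z + i%:Z) cs j ->
  (orbital_integrand y <= ((size cs)%:R * qR ^ (- j) / qR ^ (e%:Z + i%:Z))%:E)%E.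
Proof.
move=> y0 vy cover.
have absy : absv v R q y = qR ^ (e%:Z + i%:Z) by rewrite /absv (negbTE y0) vy.
rewrite -vy in cover; rewrite /orbital_integrand absy -vy.
apply: le_trans (lee_wpmul2r _ (inner_integral_le y0 cover)) _.
  by rewrite lee_fin invr_ge0 exprn_ge0 // exprz_ge0 // ltW.
rewrite -EFinM lee_fin opprD expfzDr // expr2 invfM !mulrA mulfK //.
exact: expfz_neq0.
Qed.

Lemma orbital_integral_le_series (B : nat -> R) : (forall i, 0 <= B i) ->
  (forall i : nat, exists cs j, (size cs)%:R * qR ^ (- j) <= B i /\
     aroots_covered m u (e%:Z + i%:Z) cs j) ->
  (\int[mu]_(y in [set y : Kmeas v | (y : K) != 0%R]) orbital_integrand y <=
     \sum_(i <oo) (B i * (1 - qR^-1))%:E)%E.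
Proof.
move=> B0 hB.
pose c i := B i / qR ^ (e%:Z + i%:Z).
have c0 i : 0 <= c i by rewrite divr_ge0 // exprz_ge0 // ltW.
pose A i := annulus (e%:Z + i%:Z).
have term0 i y : (0 <= (c i * \1_(A i) y)%:E)%E by rewrite lee_fin mulr_ge0 // indicE ler0n.
apply: le_trans (_ : _ <= \int[mu]_(y in [set y : Kmeas v | (y : K) != 0%R])
    \sum_(i <oo) (c i * \1_(A i) y)%:E)%E _.
  apply: nonmeasurable_ge0_le_integral => y /= y0; first exact: orbital_integrand_ge0.
  have [lt|ge] := ltP (- v y) e%:Z.
    by rewrite orbital_integrand0 //; apply: nneseries_ge0 => i _ _; exact: term0.
  have [i vy] : exists i : nat, - v y = e%:Z + i%:Z.
    by exists `|- v y - e%:Z|%N; rewrite gez0_abs ?subr_ge0 //; lia.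
  have [cs [j [cs_B cover]]] := hB i.
  apply: le_trans (orbital_integrand_le y0 vy cover) _.
  apply: le_trans (nneseries_lim_ge i.+1 (fun n _ _ => term0 n y)).
  rewrite big_nat_recr //= indicE mem_set ?mulr1; last by apply: annulusP => //; rewrite -vy opprK.
  apply: le_trans (leeDr _ _); first by rewrite lee_fin ler_wpM2r // invr_ge0 exprz_ge0 // ltW.
  by apply: sume_ge0 => n _; exact: term0.
apply: le_trans (integral_step_series_le _ _ c0 (fun i => measurable_annulus _)) _.
apply: lee_nneseries => [i _ _|i _]; first by rewrite mule_ge0 ?lee_fin.
rewrite mu_annulus -EFinM lee_fin /c mulrA divfK //; exact: expfz_neq0.
Qed.

Let qR_gt1 : 1 < qR. Proof. by rewrite ltr1n residue_card_gt1. Qed.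
Let r := qR^-1.
Let r_ge0 : 0 <= r. Proof. by rewrite invr_ge0 ltW. Qed.
Let one_minus_r_ge0 : 0 <= 1 - r. Proof. by rewrite subr_ge0 invf_le1 // ltW. Qed.

Lemma orbital_integral_le_disc_unit N : e = 0%N -> disc m u != 0 -> v (disc m u) = 0 ->
  num_classes_mod v (fun t => inO v t /\ congrv v (t ^+ 2 - m * t + u) 0) N ->
  (\int[mu]_(y in [set y : Kmeas v | (y : K) != 0%R]) orbital_integrand y <=
     ((qR - 1 + N%:R) / qR)%:E)%E.
Proof.
move=> e0 D0 vD hN.
pose B i := if i is i'.+1 then N%:R * r * r ^+ i' else 1.
have B0 i : 0 <= B i by case: i => [|i] //=; rewrite !mulr_ge0 ?exprn_ge0.
apply: le_trans (orbital_integral_le_series B0 _) _.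
  case=> [|i].
    exists [:: 0], 0; split; first by rewrite /B expr0z mulr1.
    by move=> w wO _; exists 0; rewrite ?mem_seq1 ?subr0.
  have [cs size_cs cover] := aroots_covered_residues Hu (k := i.+1) D0 vD isT hN.
  exists cs, i.+1%:Z; split; last by rewrite e0 add0r.
  by rewrite size_cs /B -exprnN exprVn exprS invfM mulrA.
apply: nneseries_bounded_le => [i|n]; first by rewrite mulr_ge0.
have -> : (qR - 1 + N%:R) / qR = (1 - r) + N%:R * r by rewrite /r; field.
case: n => [|n]; first by rewrite big_ord0 addr_ge0 ?mulr_ge0.
rewrite big_ord_recl mul1r lerD2l.
by apply: geometric_partial_sum_le; rewrite ?mulr_ge0.
Qed.

Lemma orbital_integral_le_disc : disc m u != 0 ->
  (\int[mu]_(y in [set y : Kmeas v | (y : K) != 0%R]) orbital_integrand y <=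
     (4 * qR `^ ((v (disc m u))%:~R / 2 - e%:R))%:E)%E.
Proof.
move=> D0; set C := qR `^ _.
have C0 : 0 <= C by apply: powR_ge0.
pose B i := 2 * C * r ^+ i.
have B0 i : 0 <= B i by rewrite !mulr_ge0 ?exprn_ge0.
apply: le_trans (orbital_integral_le_series B0 _) _.
  move=> i; have [w1 [w2 [j [hj cover]]]] := aroots_in_two_balls Hu (e%:Z + i%:Z) D0.
  exists [:: w1; w2], j; split; last first.
    by move=> w _ /cover[]; [exists w1|exists w2]; rewrite // !inE eqxx ?orbT.
  rewrite /B -mulrA ler_wpM2l // (_ : C * r ^+ i = qR `^ ((v (disc m u))%:~R / 2 - e%:R - i%:R)).
    apply: exprz_le_powR; first exact: ltW.
    move: hj; rewrite -(ler_int R) !(intrD, intrM, intrB) /=; lra.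
  by rewrite powRD ?qR0 ?implybT // powRN powR_mulrn ?ltW // /r exprVn.
apply: nneseries_bounded_le => [i|n]; first by rewrite mulr_ge0.
apply: le_trans (geometric_partial_sum_le n _ r_ge0) _; first by rewrite mulr_ge0.
lra.
Qed.

End OrbitalIntegral.

End HaarMeasure.
End Valuation.

Theorem lemma3p6 (R : realType) (K : fieldType) (v : K -> int) (q : nat)
  (mu : {measure set (Kmeas v) -> \bar R})
  (e : nat) (m u : K) (N : nat) :
  nonarch_local_field v q ->
  (* mu is the additive Haar measure d_v x with Vol(O_F) = 1 *)
  (forall (a : K) (A : set (Kmeas v)), measurable A ->
      mu [set x : Kmeas v | A ((x : K) + a)] = mu A) ->
  mu (inO v : set (Kmeas v)) = 1%E ->
  inO v m -> unitO v u ->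
  (* N_v = #{ t in O/varpi O : t^2 - m t + u = 0 } *)
  num_classes_mod v (fun t => inO v t /\ congrv v (t ^+ 2 - m * t + u) 0) N ->
  (`| \int[mu]_(y in [set y : Kmeas v | (y : K) != 0%R])
        ((\int[mu]_(x in [set: Kmeas v])
            (phi_v v R e (invmx (gxy x y) *m gamma_mu m u *m gxy x y))%:E)
         * ((absv v R q y) ^-2)%R%:E) | <=
   lemma3p6_bound v R q N e (m ^+ 2 - 4%:R * u))%E.
Proof.
move=> [Hv _ Hcl] mu_translate mu_inO _ Hu hN.
rewrite gee0_abs; last by apply: integral_ge0 => y _; exact: orbital_integrand_ge0.
rewrite /lemma3p6_bound; case: eqP => [_|/eqP D0]; first by rewrite leey.
case: ifP => [/andP[/eqP e0 /eqP vD]|_].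
  exact (orbital_integral_le_disc_unit Hv Hcl mu_translate mu_inO Hu e0 D0 vD hN).
exact (orbital_integral_le_disc Hv Hcl mu_translate mu_inO e Hu D0).
Qed.
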